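(* For $d\in[0,D]$, let $U(d)$ be the optimal value of \[ \min_{\{E_n\},\{t_n\}} \ \sum_{n=1}^N E_n\left(1+\frac{h_n}{g_n}\right) \] subject to \[ d\le \sum_{n=1}^N t_n W\ln\left(1+\frac{E_n h_n}{t_n\sigma^2 W}\right),\qquad 2\sum_{n=1}^N t_n\le T-\frac{Ld}{f_B},\qquad E_n\ge 0,\ t_n\ge 0\ \ \forall n. \] Equivalently, $U(d)$ is the optimal value of \[ \min_{\{E_n\ge0\}} \sum_{n=1}^N E_n\left(1+\frac{h_n}{g_n}\right)\quad \text{s.t.}\quad \sum_{n=1}^N E_nh_n\ge \frac12\sigma^2W\left(T-\frac{Ld}{f_B}\right)\left(e^{\frac{2d}{W(T-Ld/f_B)}}-1\right). \] Then the problem \[ \min_{0\le d\le D}\ U(d)+\frac{\kappa L^3(D-d)^3}{T^2} \] is a convex optimization problem, i.e., its objective is a convex function of $d$.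
   Context: All parameters $N, h_n, g_n, W, \sigma^2, \kappa, L, D, T, f_B$ are given positive constants, and $n$ ranges over $\{1,\dots,N\}$. The term $t_n W\ln\left(1+\frac{E_n h_n}{t_n\sigma^2W}\right)$ is interpreted as $0$ when $t_n=0$. Here $d$ ranges over values with $Ld\le f_BT$; the value $U(d)$ is understood as $+\infty$ when the inner problem is infeasible. *)

From HB Require Import structures.
From mathcomp Require Import all_boot all_order all_algebra.
From mathcomp Require Import all_classical all_reals.
From mathcomp Require Import ereal exp.

Set Implicit Arguments.
Unset Strict Implicit.
Unset Printing Implicit Defensive.
Import Order.TTheory GRing.Theory Num.Theory.
Local Open Scope ring_scope.

Section Defs.
Variables (R : realType) (N : nat) (h g : 'I_N -> R) (W sigma L T fB : R).

Definition rate (n : 'I_N) (t E : R) : R :=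
  if t == 0 then 0 else t * W * ln (1 + E * h n / (t * sigma ^+ 2 * W)).

Definition feasible (d : R) (E t : 'I_N -> R) : Prop :=
  [/\ forall n, 0 <= E n, forall n, 0 <= t n,
      d <= \sum_(n < N) rate n (t n) (E n)
    & 2 * \sum_(n < N) t n <= T - L * d / fB].

Definition cost (E : 'I_N -> R) : R := \sum_(n < N) E n * (1 + h n / g n).

(* optimal value U(d) (infimum; +oo when infeasible) *)
Definition U (d : R) : \bar R :=
  ereal_inf [set x | exists E t, feasible d E t /\ x = (cost E)%:E].

Definition outer_obj (kappa D : R) (d : R) : \bar R :=
  (U d + (kappa * L ^+ 3 * (D - d) ^+ 3 / T ^+ 2)%:E)%E.
End Defs.

From HB Require Import structures.
From mathcomp Require Import all_boot all_order all_algebra.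
From mathcomp Require Import all_classical all_reals.
From mathcomp Require Import ereal exp.
From mathcomp Require Import ring lra.
Import Order.TTheory GRing.Theory Num.Theory.
Local Open Scope ring_scope.

(* The rate t W ln(1 + E h/(t sigma^2 W)) is the perspective of a concave
   function of E: it is positively homogeneous in (t, E) and, by concavity of
   ln, superadditive, hence jointly concave.  Consequently a convex combination of feasible points for d1 and d2 is
   feasible for the same combination of d1 and d2, and since the cost is
   linear, U is convex.  The penalty kappa L^3 (D - d)^3 / T^2 is convex
   because the cube is convex on the nonnegative reals. *)

Lemma ln_concave_weighted (R : realType) (t1 t2 u1 u2 : R) :
  0 < t1 -> 0 < t2 -> 0 < u1 -> 0 < u2 ->
  t1 * ln u1 + t2 * ln u2 <= (t1 + t2) * ln ((t1 * u1 + t2 * u2) / (t1 + t2)).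
Proof.
move=> t1_gt0 t2_gt0 u1_gt0 u2_gt0.
have t_gt0 : 0 < t1 + t2 by lra.
set lam := t1 / (t1 + t2).
have lam_ge0 : 0 <= lam by rewrite divr_ge0 ?ltW.
have lam_le1 : lam <= 1 by rewrite ler_pdivrMr // mul1r; lra.
have lamC : 1 - lam = t2 / (t1 + t2) by rewrite /lam; field; rewrite gt_eqF.
have jensen : lam * ln u1 + (1 - lam) * ln u2 <= ln (lam * u1 + (1 - lam) * u2).
  exact: (concave_ln (Itv01 lam_ge0 lam_le1) u1_gt0 u2_gt0).
have -> : (t1 * u1 + t2 * u2) / (t1 + t2) = lam * u1 + (1 - lam) * u2.
  by rewrite lamC /lam; field; rewrite gt_eqF.
have -> : t1 * ln u1 + t2 * ln u2 = (t1 + t2) * (lam * ln u1 + (1 - lam) * ln u2).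
  by rewrite lamC /lam; field; rewrite gt_eqF.
by rewrite ler_wpM2l // ltW.
Qed.

Lemma expr3_convex (R : realFieldType) (lam a b : R) :
  0 <= lam <= 1 -> 0 <= a -> 0 <= b ->
  (lam * a + (1 - lam) * b) ^+ 3 <= lam * a ^+ 3 + (1 - lam) * b ^+ 3.
Proof.
move=> /andP[lam_ge0 lam_le1] a_ge0 b_ge0.
have -> : lam * a ^+ 3 + (1 - lam) * b ^+ 3 = (lam * a + (1 - lam) * b) ^+ 3
    + lam * (1 - lam) * (a - b) ^+ 2 * ((1 + lam) * a + (2 - lam) * b) by ring.
rewrite lerDl; apply: mulr_ge0; last by rewrite addr_ge0 // mulr_ge0 //; lra.
by rewrite mulr_ge0 ?sqr_ge0 // mulr_ge0 //; lra.
Qed.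

Lemma ereal_inf_convex_le (R : realType) (A B C : set \bar R) (lam : R) :
  0 < lam < 1 ->
  (forall a, A a -> 0 <= a)%E -> (forall b, B b -> 0 <= b)%E ->
  (forall a b : R, A a%:E -> B b%:E ->
     exists2 c, C c & (c <= (lam * a + (1 - lam) * b)%:E)%E) ->
  (ereal_inf C <= lam%:E * ereal_inf A + (1 - lam)%:E * ereal_inf B)%E.
Proof.
move=> /andP[lam_gt0 lam_lt1] A_ge0 B_ge0 combC.
have lamC_gt0 : 0 < 1 - lam by lra.
have infA_ge0 : (0 <= ereal_inf A)%E by apply/ereal_infP.
have infB_ge0 : (0 <= ereal_inf B)%E by apply/ereal_infP.
have termA_ge0 : (0 <= lam%:E * ereal_inf A)%E by rewrite mule_ge0 // lee_fin ltW.
have termB_ge0 : (0 <= (1 - lam)%:E * ereal_inf B)%E by rewrite mule_ge0 // lee_fin ltW.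
case infAE : (ereal_inf A) infA_ge0 termA_ge0 => [a0| |] // a0_ge0 _; last first.
  by rewrite gt0_muley ?lte_fin // addye ?leey // gt_eqF // (lt_le_trans _ termB_ge0) ?ltNy0.
case infBE : (ereal_inf B) infB_ge0 termB_ge0 => [b0| |] // b0_ge0 _; last first.
  by rewrite gt0_muley ?lte_fin // -EFinM addey ?leey.
apply/lee_addgt0Pr => e e_gt0.
have [a Aa a_lt] : exists2 a, A a & (a < (a0 + e)%:E)%E.
  by apply: ereal_inf_lt; rewrite infAE lte_fin; lra.
have [b Bb b_lt] : exists2 b, B b & (b < (b0 + e)%:E)%E.
  by apply: ereal_inf_lt; rewrite infBE lte_fin; lra.
case: a Aa a_lt (A_ge0 a Aa) => [a| |] // Aa a_lt _.
case: b Bb b_lt (B_ge0 b Bb) => [b| |] // Bb b_lt _.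
move: a_lt b_lt; rewrite !lte_fin => a_lt b_lt.
have [c Cc c_le] := combC a b Aa Bb.
apply: ge_ereal_inf; exists c => //; apply: (le_trans c_le).
rewrite -!EFinM -!EFinD lee_fin; nra.
Qed.

Section Rate.
Variables (R : realType) (N : nat) (h : 'I_N -> R) (W sigma : R).
Hypotheses (h_gt0 : forall n, 0 < h n) (W_gt0 : 0 < W) (sigma_gt0 : 0 < sigma).

Local Notation rate := (rate h W sigma).

Lemma rate0t (n : 'I_N) (E : R) : rate n 0 E = 0.
Proof. by rewrite /rate eqxx. Qed.

Lemma gain_gt0 (n : 'I_N) : 0 < h n / (sigma ^+ 2 * W).
Proof. by rewrite divr_gt0 // mulr_gt0 ?exprn_gt0. Qed.

Lemma snr1D_gt0 (n : 'I_N) (t E : R) : 0 < t -> 0 <= E ->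
  0 < 1 + h n / (sigma ^+ 2 * W) * E / t.
Proof.
move=> t_gt0 E_ge0; suff : 0 <= h n / (sigma ^+ 2 * W) * E / t by lra.
by rewrite divr_ge0 ?(ltW t_gt0) // mulr_ge0 // ltW // gain_gt0.
Qed.

Lemma rate_gt0E (n : 'I_N) (t E : R) : 0 < t ->
  rate n t E = t * W * ln (1 + h n / (sigma ^+ 2 * W) * E / t).
Proof.
move=> t_gt0; rewrite /rate gt_eqF //.
by congr (_ * ln (1 + _)); field; rewrite !gt_eqF.
Qed.

Lemma rateZ (n : 'I_N) (a t E : R) : 0 <= a -> rate n (a * t) (a * E) = a * rate n t E.
Proof.
rewrite le_eqVlt => /predU1P[<-|a_gt0]; first by rewrite !mul0r rate0t.
have [->|t_neq0] := eqVneq t 0; first by rewrite mulr0 !rate0t mulr0.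
rewrite /rate mulf_eq0 (negbTE t_neq0) gt_eqF //= !mulrA.
by congr (_ * ln (1 + _)); field; rewrite t_neq0 !gt_eqF.
Qed.

Lemma rate_le (n : 'I_N) (t E1 E2 : R) : 0 <= t -> 0 <= E1 -> E1 <= E2 ->
  rate n t E1 <= rate n t E2.
Proof.
rewrite le_eqVlt => /predU1P[<-|t_gt0] E1_ge0 E12; first by rewrite !rate0t.
have E2_ge0 : 0 <= E2 by apply: le_trans E12.
have tW_ge0 : 0 <= t * W by rewrite mulr_ge0 ?ltW.
rewrite !rate_gt0E // ler_wpM2l // ler_ln ?posrE ?snr1D_gt0 //.
by rewrite lerD2l ler_pM2r ?invr_gt0 // ler_wpM2l // ltW // gain_gt0.
Qed.

Lemma rate_superadditive (n : 'I_N) (t1 t2 E1 E2 : R) :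
  0 <= t1 -> 0 <= t2 -> 0 <= E1 -> 0 <= E2 ->
  rate n t1 E1 + rate n t2 E2 <= rate n (t1 + t2) (E1 + E2).
Proof.
rewrite le_eqVlt => /predU1P[<-|t1_gt0] t2_ge0 E1_ge0 E2_ge0.
  by rewrite rate0t !add0r rate_le //; lra.
move: t2_ge0; rewrite le_eqVlt => /predU1P[<-|t2_gt0].
  by rewrite rate0t !addr0 rate_le //; lra.
have t_gt0 : 0 < t1 + t2 by lra.
rewrite !rate_gt0E //.
set k := h n / (sigma ^+ 2 * W).
have -> : 1 + k * (E1 + E2) / (t1 + t2) =
    (t1 * (1 + k * E1 / t1) + t2 * (1 + k * E2 / t2)) / (t1 + t2).
  by field; rewrite !gt_eqF.
rewrite ![_ * W * _]mulrAC -mulrDl ler_wpM2r ?(ltW W_gt0) //.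
by apply: ln_concave_weighted; rewrite ?snr1D_gt0.
Qed.

Lemma rate_concave (n : 'I_N) (lam t1 t2 E1 E2 : R) : 0 <= lam <= 1 ->
  0 <= t1 -> 0 <= t2 -> 0 <= E1 -> 0 <= E2 ->
  lam * rate n t1 E1 + (1 - lam) * rate n t2 E2 <=
  rate n (lam * t1 + (1 - lam) * t2) (lam * E1 + (1 - lam) * E2).
Proof.
move=> /andP[lam_ge0 lam_le1] t1_ge0 t2_ge0 E1_ge0 E2_ge0.
have lamC_ge0 : 0 <= 1 - lam by lra.
by rewrite -!rateZ // rate_superadditive // mulr_ge0.
Qed.
End Rate.

Section Problem.
Variables (R : realType) (N : nat) (h g : 'I_N -> R) (W sigma L T fB : R).
Hypotheses (h_gt0 : forall n, 0 < h n) (g_gt0 : forall n, 0 < g n)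
  (W_gt0 : 0 < W) (sigma_gt0 : 0 < sigma) (fB_gt0 : 0 < fB).

Local Notation feasible := (feasible h W sigma L T fB).
Local Notation cost := (cost h g).
Local Notation U := (U h g W sigma L T fB).

Lemma feasible_convex (lam x y : R) (E1 t1 E2 t2 : 'I_N -> R) : 0 <= lam <= 1 ->
  feasible x E1 t1 -> feasible y E2 t2 ->
  feasible (lam * x + (1 - lam) * y)
    (fun n => lam * E1 n + (1 - lam) * E2 n)
    (fun n => lam * t1 n + (1 - lam) * t2 n).
Proof.
move=> lam01 [E1_ge0 t1_ge0 rate1 time1] [E2_ge0 t2_ge0 rate2 time2].
have /andP[lam_ge0 lam_le1] := lam01.
have lamC_ge0 : 0 <= 1 - lam by lra.
split=> [n|n||]; rewrite ?addr_ge0 ?mulr_ge0 //.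
- apply: le_trans (_ : lam * \sum_n rate h W sigma n (t1 n) (E1 n) +
      (1 - lam) * \sum_n rate h W sigma n (t2 n) (E2 n) <= _).
    by rewrite lerD // ler_wpM2l.
  rewrite !mulr_sumr -big_split ler_sum // => n _.
  exact: rate_concave.
- have -> : T - L * (lam * x + (1 - lam) * y) / fB =
      lam * (T - L * x / fB) + (1 - lam) * (T - L * y / fB).
    by field; rewrite gt_eqF.
  rewrite big_split /= -!mulr_sumr.
  suff : lam * (2 * \sum_n t1 n) + (1 - lam) * (2 * \sum_n t2 n) <=
      lam * (T - L * x / fB) + (1 - lam) * (T - L * y / fB) by lra.
  by rewrite lerD // ler_wpM2l.
Qed.

Lemma cost_convex_comb (lam : R) (E1 E2 : 'I_N -> R) :
  cost (fun n => lam * E1 n + (1 - lam) * E2 n) = lam * cost E1 + (1 - lam) * cost E2.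
Proof. by rewrite /cost !mulr_sumr -big_split /=; apply: eq_bigr => n _; ring. Qed.

Lemma cost_ge0 (E : 'I_N -> R) : (forall n, 0 <= E n) -> 0 <= cost E.
Proof.
move=> E_ge0; rewrite sumr_ge0 // => n _.
by rewrite mulr_ge0 // addr_ge0 // divr_ge0 // ltW.
Qed.

Lemma U_ge0 (d : R) : (0 <= U d)%E.
Proof. by apply/ereal_infP => _ [E [t [[E_ge0 _ _ _] ->]]]; rewrite lee_fin cost_ge0. Qed.

Lemma U_convex (lam x y : R) : 0 <= lam <= 1 ->
  (U (lam * x + (1 - lam) * y) <= lam%:E * U x + (1 - lam)%:E * U y)%E.
Proof.
move=> lam01; have /andP[lam_ge0 lam_le1] := lam01.
have [->|lam_neq0] := eqVneq lam 0.
  by rewrite mul0r add0r subr0 mul1r mul0e add0e mul1e.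
have [->|lam_neq1] := eqVneq lam 1.
  by rewrite subrr mul0r addr0 mul1r mul1e mul0e adde0.
apply: ereal_inf_convex_le.
  by rewrite !lt_neqAle eq_sym lam_neq0 lam_neq1 lam_ge0 lam_le1.
1,2: by move=> _ [E [t [[E_ge0 _ _ _] ->]]]; rewrite lee_fin cost_ge0.
move=> a b [E1 [t1 [feas1 [->]]]] [E2 [t2 [feas2 [->]]]].
pose E n := lam * E1 n + (1 - lam) * E2 n.
exists (cost E)%:E; last by rewrite cost_convex_comb.
exists E, (fun n => lam * t1 n + (1 - lam) * t2 n).
by split; first exact: feasible_convex.
Qed.
End Problem.

Theorem lemma4 (R : realType) (N : nat) (h g : 'I_N -> R)
  (W sigma kappa L D T fB : R)
  (hpos : forall n, 0 < h n) (gpos : forall n, 0 < g n)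
  (Wpos : 0 < W) (sigmapos : 0 < sigma) (kappapos : 0 < kappa)
  (Lpos : 0 < L) (Dpos : 0 < D) (Tpos : 0 < T) (fBpos : 0 < fB) :
  forall x y lam : R,
    0 <= x <= D -> L * x <= fB * T ->
    0 <= y <= D -> L * y <= fB * T ->
    0 <= lam <= 1 ->
    (outer_obj h g W sigma L T fB kappa D (lam * x + (1 - lam) * y)
     <= lam%:E * outer_obj h g W sigma L T fB kappa D x
        + (1 - lam)%:E * outer_obj h g W sigma L T fB kappa D y)%E.
Proof.
move=> x y lam /andP[_ x_le] _ /andP[_ y_le] _ lam01.
have /andP[lam_ge0 lam_le1] := lam01.
set K := kappa * L ^+ 3 / T ^+ 2.
have K_ge0 : 0 <= K by rewrite divr_ge0 ?mulr_ge0 ?exprn_ge0 ?ltW.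
have penaltyE d : kappa * L ^+ 3 * (D - d) ^+ 3 / T ^+ 2 = K * (D - d) ^+ 3.
  by rewrite /K; ring.
have penalty_ge0 d : d <= D -> 0 <= K * (D - d) ^+ 3.
  by move=> d_le; rewrite mulr_ge0 // exprn_ge0 // subr_ge0.
rewrite /outer_obj !penaltyE.
rewrite !ge0_muleDr ?lee_fin ?penalty_ge0 ?U_ge0 // addeACA.
apply: leeD; first exact: U_convex.
rewrite -!EFinM -!EFinD lee_fin.
have -> : D - (lam * x + (1 - lam) * y) = lam * (D - x) + (1 - lam) * (D - y) by ring.
rewrite [lam * (K * _)]mulrCA [(1 - lam) * (K * _)]mulrCA -mulrDr ler_wpM2l //.
by rewrite expr3_convex // subr_ge0.
Qed.
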